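(* Let $K$ be a field, $X$ a set, $>$ a semigroup well-ordering on $X^\dagger$, and $F=(F_T,F_P)$ with $F_T\subseteq K[\dashv\! X^\dagger]$ and $F_P\subseteq K[X^\dagger]$. If $f\in F$ is such that $f\to_{F\setminus\{f\}}0$, then the relations $\stackrel{*}{\to}_F$ and $\stackrel{*}{\to}_{F\setminus\{f\}}$ on $K[\dashv\! X^\dagger]$ coincide.
   Context: $X^\dagger$ is the free semigroup of nonempty words on $X$, $X^*$ the free monoid (empty word $id$), $K[X^\dagger]$ the free noncommutative $K$-algebra. A semigroup well-ordering is a well-ordering $>$ on $X^\dagger$ with $m_1>m_2\Rightarrow um_1v>um_2v$ for all $u,v\in X^*$. For a nonzero polynomial, $\mathtt{LT}$ is its largest term and $\mathtt{LC}$ its coefficient. The paper assumes all polynomials are monic (leading coefficient $1$). Tagged polynomials: $\dashv$ is a symbol; $K[\dashv\! X^\dagger]$ is the $K$-vector space with basis the tagged terms $\dashv\! m$ ($m\in X^\dagger$), a right $K[X^\dagger]$-module via $(\dashv\! m)w=\dashv\!(mw)$. For $p=\sum k_im_i\in K[X^\dagger]$, $w\in X^*$: $\dashv\! w\,p:=\sum k_i\dashv\!(wm_i)$. Tagged terms are ordered by $\dashv\! m_1>\dashv\! m_2\iff m_1>m_2$. Reduction of tagged polynomials by a mixed set $G=(G_T,G_P)$: $g\to_G g-k g_iv$ if $g_i\in G_T$, $v\in X^*$ and $\mathtt{LT}(g_i)v$ occurs in $g$ with coefficient $k\neq0$; and $g\to_G g-k\dashv\! w\,g_i\,v$ if $g_i\in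 G_P$, $w,v\in X^*$ and $\dashv\!(w\,\mathtt{LT}(g_i)\,v)$ occurs in $g$ with coefficient $k\neq0$. An untagged $p\in K[X^\dagger]$ is reduced by $G$ via $p\to p-k\,wg_iv$ for $g_i\in G_P$, $w,v\in X^*$, when $w\,\mathtt{LT}(g_i)\,v$ occurs in $p$ with coefficient $k\ne0$. $\stackrel{*}{\to}$ denotes reflexive transitive closure. *)

From HB Require Import structures.
From mathcomp Require Import all_boot all_algebra.
From Stdlib Require Import Relations.
From Stdlib Require List.
Set Implicit Arguments. Unset Strict Implicit. Unset Printing Implicit Defensive.
Import GRing.Theory.
Local Open Scope ring_scope.

Section MixedReduction.
Variables (K : fieldType) (X : Type).

(* Words: seq X; X^dagger = nonempty words, id = [::].
   An (untagged) polynomial in K[X^dagger], resp. a tagged polynomial in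
   K[-| X^dagger], is represented by its coefficient function seq X -> K
   (for a tagged polynomial, the value at m is the coefficient of -| m). *)
Definition coeffs := seq X -> K.

Definition is_poly (p : coeffs) : Prop :=
  p [::] = 0 /\ exists l : list (seq X), forall m, p m <> 0 -> Stdlib.Lists.List.In m l.

Definition semigroup_wellorder (gt : seq X -> seq X -> Prop) : Prop :=
  [/\ (forall m, m <> [::] -> ~ gt m m),
      (forall a b c, a <> [::] -> b <> [::] -> c <> [::] ->
          gt a b -> gt b c -> gt a c),
      (forall a b, a <> [::] -> b <> [::] -> a <> b -> gt a b \/ gt b a),
      well_founded (fun a b => [/\ a <> [::], b <> [::] & gt b a]) &
      (forall m1 m2 u v, m1 <> [::] -> m2 <> [::] ->
          gt m1 m2 -> gt (u ++ m1 ++ v) (u ++ m2 ++ v))].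

Definition is_LT (gt : seq X -> seq X -> Prop) (p : coeffs) (m : seq X) : Prop :=
  [/\ m <> [::], p m <> 0 & forall m', p m' <> 0 -> m' = m \/ gt m m'].

Definition is_monic gt (p : coeffs) : Prop := exists m, is_LT gt p m /\ p m = 1.

(* g' = g - k * (w h v)   (or  g - k * (-| w h v)  in the tagged case);
   stated coefficientwise, using injectivity of m0 |-> w ++ m0 ++ v *)
Definition sub_shift (g g' : coeffs) (k : K) (w : seq X) (h : coeffs) (v : seq X) : Prop :=
  (forall m0, g' (w ++ m0 ++ v) = g (w ++ m0 ++ v) - k * h m0) /\
  (forall m, (forall m0, m <> w ++ m0 ++ v) -> g' m = g m).

Record mset := MSet { mT : coeffs -> Prop ; mP : coeffs -> Prop }.

Definition tred gt (G : mset) (g g' : coeffs) : Prop :=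
  (exists gi, mT G gi /\ exists v m, is_LT gt gi m /\ g (m ++ v) <> 0 /\
      sub_shift g g' (g (m ++ v)) [::] gi v) \/
  (exists gi, mP G gi /\ exists w v m, is_LT gt gi m /\ g (w ++ m ++ v) <> 0 /\
      sub_shift g g' (g (w ++ m ++ v)) w gi v).

Definition ured gt (G : mset) (p p' : coeffs) : Prop :=
  exists gi, mP G gi /\ exists w v m, is_LT gt gi m /\ p (w ++ m ++ v) <> 0 /\
      sub_shift p p' (p (w ++ m ++ v)) w gi v.

Inductive melem := TagE of coeffs | PolE of coeffs.

Definition in_mset (F : mset) (f : melem) : Prop :=
  match f with TagE g => mT F g | PolE p => mP F p end.

Definition mremove (F : mset) (f : melem) : mset :=
  match f with
  | TagE g => MSet (fun h => mT F h /\ h <> g) (mP F)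
  | PolE p => MSet (mT F) (fun h => mP F h /\ h <> p)
  end.

Definition red_to_zero gt (G : mset) (f : melem) : Prop :=
  match f with
  | TagE g => tred gt G g (fun _ => 0)
  | PolE p => ured gt G p (fun _ => 0)
  end.

Definition tred_star gt (G : mset) : coeffs -> coeffs -> Prop :=
  clos_refl_trans coeffs (tred gt G).

End MixedReduction.

From mathcomp Require Import all_boot all_algebra.
From Stdlib Require Import Relations Classical.
Import GRing.Theory.
Local Open Scope ring_scope.
Set Implicit Arguments.
Unset Strict Implicit.
Unset Printing Implicit Defensive.

(* Every step by F \ {f} is a step by F, so only the converse needs work.
   Since f reduces to 0 in one step by some h in F \ {f}, f is a scalar
   multiple c w h v of a shift of h; as f is monic, LT(f) = w LT(h) v and
   c = 1, so f = w h v.  A step g -> g - k w' f v' subtracting a shift of f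
   is therefore the step g -> g - k (w' w) h (v v') by h itself. *)

Lemma clos_rt_monotone (A : Type) (R S : relation A) :
  inclusion A R S -> inclusion A (clos_refl_trans A R) (clos_refl_trans A S).
Proof.
move=> RS x y; elim=> [u v /RS|u|u v w _ IHuv _ IHvw].
- exact: rt_step.
- exact: rt_refl.
- exact: rt_trans IHuv IHvw.
Qed.

Section ShiftReduction.
Variables (K : fieldType) (X : Type) (gt : seq X -> seq X -> Prop).

(* The conjunctions are nested as in [tred] and [ured], so that their
   reduction steps unfold to this predicate. *)
Definition shift_reduces (g g' : coeffs K X) (w : seq X) (h : coeffs K X)
    (v : seq X) : Prop :=
  exists m, is_LT gt h m /\ g (w ++ m ++ v) <> 0 /\
    sub_shift g g' (g (w ++ m ++ v)) w h v.

Lemma sub_shift0_eq (f h : coeffs K X) c w v :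
  sub_shift f (fun _ => 0) c w h v ->
  (forall m0, f (w ++ m0 ++ v) = c * h m0) /\
  (forall m, (forall m0, m <> w ++ m0 ++ v) -> f m = 0).
Proof.
case=> f_shift f_out; split=> [m0|m m_out]; last by rewrite -(f_out m m_out).
by apply/eqP; rewrite -subr_eq0 -f_shift.
Qed.

Lemma sub_shift_comp (g g' f h : coeffs K X) k c w v w' v' :
  sub_shift f (fun _ => 0) c w h v -> sub_shift g g' k w' f v' ->
  sub_shift g g' (k * c) (w' ++ w) h (v ++ v').
Proof.
move=> /sub_shift0_eq[f_shift f_out] [g_shift g_out]; split=> [m0|m m_out].
  have -> : (w' ++ w) ++ m0 ++ v ++ v' = w' ++ (w ++ m0 ++ v) ++ v'.
    by rewrite !catA.
  by rewrite g_shift f_shift mulrA.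
have [[m1 Em]|not_shift] := classic (exists m1, m = w' ++ m1 ++ v').
  rewrite Em g_shift f_out ?mulr0 ?subr0 // => m0 Em1.
  by apply: (m_out m0); rewrite Em Em1 !catA.
by apply: g_out => m0 Em; apply: not_shift; exists m0.
Qed.

Hypothesis gt_wo : semigroup_wellorder gt.

Lemma is_LT_unique (p : coeffs K X) a b : is_LT gt p a -> is_LT gt p b -> a = b.
Proof.
case: gt_wo => gt_irr gt_trans _ _ _ [a_nil pa a_max] [b_nil pb b_max].
have [//|gt_ab] := a_max b pb; have [//|gt_ba] := b_max a pa.
by case: (gt_irr a a_nil); apply: (gt_trans a b a).
Qed.

Lemma monic_LT_coef (p : coeffs K X) m : is_monic gt p -> is_LT gt p m -> p m = 1.
Proof. by move=> [m' [LTm' pm']] /is_LT_unique/(_ LTm') ->. Qed.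

Lemma is_LT_shift (f h : coeffs K X) c w v m :
  h [::] = 0 -> is_LT gt h m -> sub_shift f (fun _ => 0) c w h v ->
  f (w ++ m ++ v) <> 0 -> is_LT gt f (w ++ m ++ v).
Proof.
case: gt_wo => _ _ _ _ gt_shift h_nil [m_nil hm m_max] /sub_shift0_eq[f_shift f_out] fm.
split=> // [|m' fm'].
  by move/nilP; rewrite !cat_nilp => /and3P[_ /nilP].
have [[m1 Em']|not_shift] := classic (exists m1, m' = w ++ m1 ++ v); last first.
  by case: fm'; apply: f_out => m0 Em'; apply: not_shift; exists m0.
have hm1 : h m1 <> 0 by move=> hm10; apply: fm'; rewrite Em' f_shift hm10 mulr0.
rewrite Em'; have [->|gt_m_m1] := m_max m1 hm1; [by left | right].
by apply: gt_shift => // m1_nil; apply: hm1; rewrite m1_nil.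
Qed.

Lemma shift_reduces_comp (g g' f h : coeffs K X) w v w' v' :
  h [::] = 0 -> is_monic gt f ->
  shift_reduces f (fun _ => 0) w h v -> shift_reduces g g' w' f v' ->
  shift_reduces g g' (w' ++ w) h (v ++ v').
Proof.
move=> h_nil f_monic [m [LTm [fm f_sub]]] [mf [LTmf [gmf g_sub]]].
have LTf := is_LT_shift h_nil LTm f_sub fm.
have Emf := is_LT_unique LTmf LTf; subst mf.
have f1 : f (w ++ m ++ v) = 1 := monic_LT_coef f_monic LTf.
have Ecat : (w' ++ w) ++ m ++ v ++ v' = w' ++ (w ++ m ++ v) ++ v'.
  by rewrite !catA.
exists m; rewrite Ecat; split=> //; split=> //.
by have := sub_shift_comp f_sub g_sub; rewrite f1 mulr1.
Qed.

Variable F : mset K X.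

Lemma tred_mremove (f : melem K X) (g g' : coeffs K X) :
  tred gt (mremove F f) g g' -> tred gt F g g'.
Proof.
case: f => f [[h [Fh step]]|[h [Fh step]]].
- by left; exists h; split=> //; case: Fh.
- by right; exists h.
- by left; exists h.
- by right; exists h; split=> //; case: Fh.
Qed.

Hypothesis FT_monic : forall g, mT F g -> is_poly g /\ is_monic gt g.
Hypothesis FP_monic : forall p, mP F p -> is_poly p /\ is_monic gt p.

Lemma tred_mremove_redundant (f : melem K X) (g g' : coeffs K X) :
  in_mset F f -> red_to_zero gt (mremove F f) f ->
  tred gt F g g' -> tred gt (mremove F f) g g'.
Proof.
case: f => f /= Ff f_red.
- case=> [[h' [Fh' [v' g_red]]]|P_step]; last by right.
  have [Eh'|h'f] := classic (h' = f); last first.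
    by left; exists h'; split; [split | exists v'].
  subst h'; have f_monic := (FT_monic Ff).2.
  case: f_red => [[h [Fh [v f_red]]]|[h [Fh [w [v f_red]]]]].
  + left; exists h; split=> //; exists (v ++ v').
    exact: (shift_reduces_comp (w := [::]) (w' := [::]))
      (FT_monic Fh.1).1.1 f_monic f_red g_red.
  + right; exists h; split=> //; exists w, (v ++ v').
    exact: (shift_reduces_comp (w' := [::]))
      (FP_monic Fh).1.1 f_monic f_red g_red.
- case=> [T_step|[h' [Fh' [w' [v' g_red]]]]]; first by left.
  have [Eh'|h'f] := classic (h' = f); last first.
    by right; exists h'; split; [split | exists w', v'].
  subst h'; case: f_red => h [Fh [w [v f_red]]].
  right; exists h; split=> //; exists (w' ++ w), (v ++ v').
  exact: shift_reduces_comp (FP_monic Fh.1).1.1 (FP_monic Ff).2 f_red g_red.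
Qed.

End ShiftReduction.

Theorem lemma4p8 (K : fieldType) (X : Type) (gt : seq X -> seq X -> Prop)
    (F : mset K X) (f : melem K X) :
  semigroup_wellorder gt ->
  (forall g, mT F g -> is_poly g /\ is_monic gt g) ->
  (forall p, mP F p -> is_poly p /\ is_monic gt p) ->
  in_mset F f ->
  red_to_zero gt (mremove F f) f ->
  forall g h : coeffs K X, is_poly g -> is_poly h ->
    (tred_star gt F g h <-> tred_star gt (mremove F f) g h).
Proof.
move=> gt_wo FT_monic FP_monic Ff f_red g h _ _; split; apply: clos_rt_monotone.
- move=> u u'; exact: (tred_mremove_redundant gt_wo FT_monic FP_monic Ff f_red).
- exact: tred_mremove.
Qed.
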